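(* Let $M$ be observation-rational, and suppose there exists an event $e\in\varepsilon$ that is event-rational and such that $\alpha$ is an $e$-signal. Then for every belief state $b$, $b\diamond\alpha$ is a belief state if and only if $\alpha$ is satisfiable (i.e. not $\vdash\lnot\alpha$).
   Context: Fix a finite propositional vocabulary; $L$ is the classical propositional language and $W$ the finite set of all worlds (valuations). ''$\vdash\lnot\alpha$'' means $\alpha$ is unsatisfiable. A belief state is a probability distribution $b$ on $W$. A model is $M=\langle W,\varepsilon,T,E,O,\mathit{os}\rangle$ with $\varepsilon$ a finite set of events; $T:W\times\varepsilon\times W\to[0,1]$ with $\sum_{w'}T(w,e,w')=1$ for all $w,e$; $E(e,w)\in[0,1]$ the probability of $e$ in $w$; $O:L\times W\to[0,1]$ an observation function ($O(\alpha,w)$ = probability of observing $\alpha$ in $w$, equal for equivalent sentences); $\mathit{os}:L\times W\to[0,1]$. Update: $(b\diamond\alpha)(w')=\frac1\gamma O(\alpha,w')\sum_{w\in W}\sum_{e\in\varepsilon}T(w,e,w')E(e,w)b(w)$ with $\gamma$ the normalizing sum; $b\diamond\alpha$ is a belief state iff $\gamma>0$ and undefined otherwise. $M$ is observation-rational iff for every $\alpha$ with $\vdash\lnot\alpha$, $O(\alpha,w)=0$ for all $w$. An event $e$ is event-rational iff for all $w\in W$: there exists $w'$ with $T(w,e,w')>0$ iff $E(e,w)>0$. $\alpha$ is an $e$-signal iff for all $w'\in W$: there exists $w$ with $T(w,e,w')>0$ iff $O(\alpha,w')>0$. *)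

From HB Require Import structures.
From mathcomp Require Import all_boot all_order all_algebra.
Set Implicit Arguments. Unset Strict Implicit. Unset Printing Implicit Defensive.
Import Order.TTheory GRing.Theory Num.Theory.
Local Open Scope ring_scope.

Inductive sentence (V : Type) : Type :=
  | FVar of V
  | FBot
  | FNeg of sentence V
  | FAnd of sentence V & sentence V
  | FOr of sentence V & sentence V
  | FImp of sentence V & sentence V.

Definition world (V : finType) := {ffun V -> bool}.

Fixpoint holds (V : finType) (w : world V) (a : sentence V) : bool :=
  match a with
  | FVar p => w p
  | FBot => false
  | FNeg b => ~~ holds w b
  | FAnd b c => holds w b && holds w c
  | FOr b c => holds w b || holds w c
  | FImp b c => holds w b ==> holds w c
  end.

(* |- ~ a : a is unsatisfiable (true in no world). *)
Definition proves_neg (V : finType) (a : sentence V) : Prop :=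
  forall w : world V, ~~ holds w a.

Definition equiv_form (V : finType) (a b : sentence V) : Prop :=
  forall w : world V, holds w a = holds w b.

(* A model <W, eps, T, E, O, os>; W = world V, eps = the finite type Ev. *)
Record bmodel (R : realFieldType) (V : finType) (Ev : finType) := Model {
  T  : world V -> Ev -> world V -> R;
  E  : Ev -> world V -> R;
  O  : sentence V -> world V -> R;
  os : sentence V -> world V -> R
}.

Definition in01 (R : realFieldType) (x : R) := 0 <= x <= 1.

Definition is_model (R : realFieldType) (V Ev : finType) (M : bmodel R V Ev) : Prop :=
  (forall w e w', in01 (T M w e w')) /\
  (forall w e, \sum_(w' : world V) T M w e w' = 1) /\
  (forall e w, in01 (E M e w)) /\
  (forall a w, in01 (O M a w)) /\
  (forall a b, equiv_form a b -> forall w, O M a w = O M b w) /\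
  (forall a w, in01 (os M a w)).

Definition belief_state (R : realFieldType) (V : finType) (b : world V -> R) : Prop :=
  (forall w, 0 <= b w) /\ \sum_(w : world V) b w = 1.

Definition upd_weight (R : realFieldType) (V Ev : finType) (M : bmodel R V Ev)
    (b : world V -> R) (a : sentence V) (w' : world V) : R :=
  O M a w' * \sum_(w : world V) \sum_(e : Ev) T M w e w' * E M e w * b w.

Definition gamma (R : realFieldType) (V Ev : finType) (M : bmodel R V Ev)
    (b : world V -> R) (a : sentence V) : R :=
  \sum_(w' : world V) upd_weight M b a w'.

(* b <> a : defined (Some) iff gamma > 0, undefined (None) otherwise. *)
Definition update (R : realFieldType) (V Ev : finType) (M : bmodel R V Ev)
    (b : world V -> R) (a : sentence V) : option (world V -> R) :=
  if 0 < gamma M b a then Some (fun w' => (gamma M b a)^-1 * upd_weight M b a w')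
  else None.

Definition observation_rational (R : realFieldType) (V Ev : finType) (M : bmodel R V Ev) :=
  forall a : sentence V, proves_neg a -> forall w, O M a w = 0.

Definition event_rational (R : realFieldType) (V Ev : finType) (M : bmodel R V Ev) (e : Ev) :=
  forall w : world V, (exists w', 0 < T M w e w') <-> 0 < E M e w.

Definition signal (R : realFieldType) (V Ev : finType) (M : bmodel R V Ev) (e : Ev) (a : sentence V) :=
  forall w' : world V, (exists w, 0 < T M w e w') <-> 0 < O M a w'.

From mathcomp Require Import all_boot all_order all_algebra.
Set Implicit Arguments. Unset Strict Implicit. Unset Printing Implicit Defensive.
Import Order.TTheory GRing.Theory Num.Theory.
Local Open Scope ring_scope.

(* Unsatisfiable observations have probability 0 everywhere, which kills the
   normalising constant.  Conversely, some world w0 has positive belief, the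
   event-rational event e is possible in w0 and leads to some w', and since
   the observation is an e-signal it is possible in w'; the weight of w' is
   then positive, hence so is the normalising constant. *)

Lemma psumr_eq1_exists_gt0 (R : numDomainType) (I : finType) (F : I -> R) :
  (forall i, 0 <= F i) -> \sum_i F i = 1 -> exists i, 0 < F i.
Proof.
move=> F_ge0 sumF1.
have sumF_neq0 : \sum_i F i <> 0 by rewrite sumF1; exact/eqP/oner_neq0.
have [i /andP[_ Fi_gt0]] := psumr_neq0P (fun i _ => F_ge0 i) sumF_neq0.
by exists i.
Qed.

Lemma psumr_gt0 (R : numDomainType) (I : finType) (F : I -> R) (j : I) :
  (forall i, 0 <= F i) -> 0 < F j -> 0 < \sum_i F i.
Proof.
move=> F_ge0 Fj_gt0; rewrite (bigD1 j) //=.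
by apply: (lt_le_trans Fj_gt0); rewrite lerDl sumr_ge0.
Qed.

Section BeliefUpdate.

Variables (R : realFieldType) (V Ev : finType) (M : bmodel R V Ev).

Lemma gamma_unsat_eq0 (b : world V -> R) (a : sentence V) :
  observation_rational M -> proves_neg a -> gamma M b a = 0.
Proof.
by move=> obs_rat unsat_a; apply: big1 => w' _; rewrite /upd_weight obs_rat // mul0r.
Qed.

Hypothesis M_model : is_model M.

Lemma T_ge0 w e w' : 0 <= T M w e w'.
Proof. by case: M_model => T01 _; case/andP: (T01 w e w'). Qed.

Lemma E_ge0 e w : 0 <= E M e w.
Proof. by case: M_model => _ [_ [E01 _]]; case/andP: (E01 e w). Qed.

Lemma O_ge0 a w : 0 <= O M a w.
Proof. by case: M_model => _ [_ [_ [O01 _]]]; case/andP: (O01 a w). Qed.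

Lemma upd_weight_ge0 (b : world V -> R) a w' :
  (forall w, 0 <= b w) -> 0 <= upd_weight M b a w'.
Proof.
move=> b_ge0; rewrite /upd_weight mulr_ge0 ?O_ge0 //.
by do 2![apply: sumr_ge0 => ? _]; rewrite !mulr_ge0 ?T_ge0 ?E_ge0.
Qed.

Lemma update_belief_stateP (b : world V -> R) a :
  (forall w, 0 <= b w) ->
  (exists b', update M b a = Some b' /\ belief_state b') <-> 0 < gamma M b a.
Proof.
rewrite /update => b_ge0; split=> [[b' []]|gamma_gt0]; first by case: ifP.
rewrite gamma_gt0; eexists; split; first by [].
split=> [w|]; first by rewrite mulr_ge0 ?upd_weight_ge0 // invr_ge0 ltW.
by rewrite -mulr_sumr mulVf // lt0r_neq0.
Qed.

Lemma gamma_signal_gt0 (b : world V -> R) a e :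
  event_rational M e -> signal M e a -> belief_state b -> 0 < gamma M b a.
Proof.
move=> ev_rat sig_a [b_ge0 sum_b1].
have [w0 b_w0_gt0] := psumr_eq1_exists_gt0 b_ge0 sum_b1.
have [w' T_gt0] : exists w', 0 < T M w0 e w'.
  apply: psumr_eq1_exists_gt0 => [w'|]; first exact: T_ge0.
  by case: M_model => _ [sumT1 _]; apply: sumT1.
have E_gt0 : 0 < E M e w0 by apply/ev_rat; exists w'.
have O_gt0 : 0 < O M a w' by apply/sig_a; exists w0.
apply: (psumr_gt0 (j := w')) => [w|]; first exact: upd_weight_ge0.
rewrite /upd_weight mulr_gt0 //.
apply: (psumr_gt0 (j := w0)) => [w|].
  by apply: sumr_ge0 => ? _; rewrite !mulr_ge0 ?T_ge0 ?E_ge0.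
by apply: (psumr_gt0 (j := e)) => [e'|]; rewrite ?mulr_ge0 ?mulr_gt0 ?T_ge0 ?E_ge0.
Qed.

End BeliefUpdate.

Theorem proposition3 (R : realFieldType) (V Ev : finType) (M : bmodel R V Ev)
  (a : sentence V) :
  is_model M ->
  observation_rational M ->
  (exists e : Ev, event_rational M e /\ signal M e a) ->
  forall b : world V -> R, belief_state b ->
    ((exists b', update M b a = Some b' /\ belief_state b') <-> ~ proves_neg a).
Proof.
move=> M_model obs_rat [e [ev_rat sig_a]] b b_belief.
have [b_ge0 _] := b_belief.
apply: iff_trans (update_belief_stateP M_model a b_ge0) _.
split=> [gamma_gt0 unsat_a|_]; last exact: gamma_signal_gt0 ev_rat sig_a b_belief.
by move: gamma_gt0; rewrite gamma_unsat_eq0 ?ltxx.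
Qed.
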